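(* Let $\mu\in C^1[0,1]$ with $\mu\ge0$ and $\mu(1)\ne0$, and let $\Phi(z)=\int_0^1\mu(\alpha)z^\alpha\,d\alpha$. Then for every $z$ with $\operatorname{Re}z=\gamma>0$, $\operatorname{Re}(\Phi^{1/2}(z))\ge\frac{\sqrt2}{2}|\Phi^{1/2}(z)|$.
   Context: Powers $z^\alpha$ and $\Phi^{1/2}$ use the principal branch, with $\arg z\in(-\pi,\pi]$. *)

From Stdlib Require Import Reals.
From Coquelicot Require Import Coquelicot.
Open Scope R_scope.

(* Principal argument of a complex number, with values in (-PI, PI];
   carg 0 = 0 (irrelevant convention). *)
Definition carg (z : C) : R :=
  let x := Re z in let y := Im z in
  if Rlt_dec 0 x then atan (y / x)
  else if Rlt_dec x 0 then
    (if Rle_dec 0 y then atan (y / x) + PI else atan (y / x) - PI)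
  else
    if Rlt_dec 0 y then PI / 2
    else if Rlt_dec y 0 then - (PI / 2) else 0.

(* Principal power z^a = |z|^a e^{i a arg z} for real exponent a; 0^a := 0. *)
Definition cpow (z : C) (a : R) : C :=
  if Req_EM_T (Cmod z) 0 then (0, 0)
  else (Rpower (Cmod z) a * cos (a * carg z),
        Rpower (Cmod z) a * sin (a * carg z)).

Definition csqrt (w : C) : C := cpow w (1 / 2).

Definition Phi (mu : R -> R) (z : C) : C :=
  (RInt (fun a => mu a * Re (cpow z a)) 0 1,
   RInt (fun a => mu a * Im (cpow z a)) 0 1).

(* mu in C^1[0,1]: differentiable at every point of [0,1] (one-sided at the
   endpoints, i.e. derivative taken within [0,1]) with derivative continuous
   on [0,1]. *)
Definition C1_01 (mu : R -> R) : Prop :=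
  exists dmu : R -> R,
    (forall x, 0 <= x <= 1 ->
       filterlim (fun y => (mu y - mu x) / (y - x))
         (within (fun y => 0 <= y <= 1 /\ y <> x) (locally x))
         (locally (dmu x))) /\
    (forall x, 0 <= x <= 1 ->
       filterlim dmu (within (fun y => 0 <= y <= 1) (locally x))
         (locally (dmu x))).

(* For Re z >= 0 the principal argument of z lies in [-PI/2, PI/2], hence so does
   a * arg z for a in [0,1]: every power z^a lies in the closed right half-plane.
   Phi(z) is an integral of such powers against the weight mu >= 0, so
   Re Phi(z) >= 0, and the principal square root maps the closed right
   half-plane into the sector |arg| <= PI/4, on which Re w >= cos(PI/4) |w|. *)

From Stdlib Require Import Reals Lra Classical.
From Coquelicot Require Import Coquelicot.
Open Scope R_scope.

(* [RInt] is defined through [iota], whose junk value for a non-integrable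
   function is the real part of [p_infty], i.e. [0]. *)
Lemma RInt_not_ex (f : R -> R) (a b : R) : ~ ex_RInt f a b -> RInt f a b = 0.
Proof.
  intros Hn.
  change (R_complete_lim (fun A => forall x, is_RInt f a b x -> A x) = 0).
  unfold R_complete_lim.
  rewrite (is_lub_Rbar_unique _ p_infty); [reflexivity|].
  split.
  - intros x _. exact I.
  - intros [c| |] Hc; simpl; auto; exfalso.
    + assert (c + 1 <= c); [|lra].
      apply (Hc (c + 1)). intros y Hy. exfalso. apply Hn. now exists y.
    + apply (Hc 0). intros y Hy. exfalso. apply Hn. now exists y.
Qed.

Lemma RInt_ge_0_total (f : R -> R) (a b : R) :
  a <= b -> (forall x, a < x < b -> 0 <= f x) -> 0 <= RInt f a b.
Proof.
  intros Hab Hf. destruct (classic (ex_RInt f a b)) as [Hi|Hn].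
  - now apply RInt_ge_0.
  - rewrite RInt_not_ex by exact Hn. lra.
Qed.

Lemma Cmod_polar (r t : R) : 0 <= r -> Cmod (r * cos t, r * sin t) = r.
Proof.
  intros Hr. unfold Cmod. simpl.
  match goal with |- sqrt ?e = _ =>
    replace e with (r * r * (Rsqr (sin t) + Rsqr (cos t))) by (unfold Rsqr; ring)
  end.
  rewrite sin2_cos2, Rmult_1_r. now apply sqrt_square.
Qed.

Lemma carg_bound_Re_ge0 (w : C) : 0 <= Re w -> - (PI / 2) <= carg w <= PI / 2.
Proof.
  intros H. pose proof PI_RGT_0. unfold carg.
  destruct (Rlt_dec 0 (Re w)).
  - pose proof (atan_bound (Im w / Re w)). lra.
  - destruct (Rlt_dec (Re w) 0); [lra|].
    destruct (Rlt_dec 0 (Im w)); [lra|].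
    destruct (Rlt_dec (Im w) 0); lra.
Qed.

Lemma cos_half_ge_sqrt2_2 (t : R) :
  - (PI / 2) <= t <= PI / 2 -> sqrt 2 / 2 <= cos (t / 2).
Proof.
  intros Ht. pose proof PI_RGT_0.
  assert (E : sqrt 2 / 2 = cos (PI / 4)).
  { rewrite cos_PI4. assert (0 < sqrt 2) by (apply sqrt_lt_R0; lra).
    assert (sqrt 2 * sqrt 2 = 2) by (apply sqrt_sqrt; lra).
    field_simplify_eq; [nra | lra]. }
  assert (Habs : cos (t / 2) = cos (Rabs (t / 2))).
  { unfold Rabs. destruct Rcase_abs; [now rewrite cos_neg | reflexivity]. }
  assert (Hb : 0 <= Rabs (t / 2) <= PI / 4).
  { split; [apply Rabs_pos|]. unfold Rabs; destruct Rcase_abs; lra. }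
  rewrite E, Habs.
  destruct (Req_dec (Rabs (t / 2)) (PI / 4)) as [e | e]; [rewrite e; lra|].
  left. apply cos_decreasing_1; lra.
Qed.

Lemma Re_cpow_ge0 (z : C) (a : R) :
  0 <= Re z -> 0 <= a <= 1 -> 0 <= Re (cpow z a).
Proof.
  intros Hz Ha. unfold cpow. destruct (Req_EM_T (Cmod z) 0); simpl; [lra|].
  pose proof (carg_bound_Re_ge0 z Hz) as Harg. pose proof PI_RGT_0.
  apply Rmult_le_pos; [left; apply exp_pos|].
  assert (- (PI / 2) <= a * carg z <= PI / 2) by (split; nra).
  apply cos_ge_0; lra.
Qed.

Lemma Re_Phi_ge0 (mu : R -> R) (z : C) :
  (forall a, 0 <= a <= 1 -> 0 <= mu a) -> 0 <= Re z -> 0 <= Re (Phi mu z).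
Proof.
  intros Hmu Hz. apply RInt_ge_0_total; [lra|]. intros a Ha.
  apply Rmult_le_pos; [apply Hmu; lra | apply Re_cpow_ge0; lra].
Qed.

Lemma csqrt_sector (w : C) :
  0 <= Re w -> sqrt 2 / 2 * Cmod (csqrt w) <= Re (csqrt w).
Proof.
  intros Hw. unfold csqrt, cpow.
  destruct (Req_EM_T (Cmod w) 0); simpl.
  - rewrite (Cmod_0 : Cmod (0, 0) = 0). lra.
  - assert (Hr : 0 <= Rpower (Cmod w) (1 / 2)) by (left; apply exp_pos).
    rewrite Cmod_polar by exact Hr.
    replace (1 / 2 * carg w) with (carg w / 2) by field.
    rewrite Rmult_comm. apply Rmult_le_compat_l; [exact Hr|].
    now apply cos_half_ge_sqrt2_2, carg_bound_Re_ge0.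
Qed.

Theorem mainTheorem4 (mu : R -> R) :
  C1_01 mu ->
  (forall a, 0 <= a <= 1 -> 0 <= mu a) ->
  mu 1 <> 0 ->
  forall z : C, 0 < Re z ->
    Re (csqrt (Phi mu z)) >= sqrt 2 / 2 * Cmod (csqrt (Phi mu z)).
Proof.
  intros _ Hmu _ z Hz. apply Rle_ge, csqrt_sector, Re_Phi_ge0; [exact Hmu | lra].
Qed.
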